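(* Let a binary game be given as described in the context, and suppose Assumption (A1) holds. Then a vector $(x_i,y_i)_{i\in I}$ is a Nash equilibrium of the binary game if and only if there exist vectors $\big(\widetilde y_i^{(1)},\widetilde y_i^{(0)},\widetilde\lambda_i^{(1)},\widetilde\lambda_i^{(0)},\kappa_i^{(1)},\kappa_i^{(0)}\big)_{i\in I}$ such that, with $\zeta_i^{(1)}=\zeta_i^{(0)}=0$ for all $i\in I$, the point $\big(x_i,y_i,\widetilde y_i^{(1)},\widetilde y_i^{(0)},\widetilde\lambda_i^{(1)},\widetilde\lambda_i^{(0)},\kappa_i^{(1)},\kappa_i^{(0)},\zeta_i^{(1)},\zeta_i^{(0)}\big)_{i\in I}$ is a feasible point of problem (P).
   Context: Binary game: players $i\in I=\{1,\dots,n\}$. Player $i$ chooses a binary variable $x_i\in\{0,1\}$ and a continuous vector $y_i\in\mathbb{R}^m$, and solves $\min_{x_i,y_i} f_i(x_i,y_i,y_{-i})$ subject to $g_i(x_i,y_i)\le 0$, where $g_i:\{0,1\}\times\mathbb{R}^m\to\mathbb{R}^k$, $y_{-i}=(y_j)_{j\ne i}$ are the rivals' continuous decisions (which depend on the rivals' binary decisions), and $K_i=\{(x_i,y_i): g_i(x_i,y_i)\le 0\}$. Nash equilibrium: a vector $((x_i^*,y_i^* )\in K_i)_{i\in I}$ such that for every $i$: (a) $y_i^*$ minimizes $f_i(x_i^*,\cdot,y_{-i}^* )$ over $\{y_i: g_i(x_i^*,y_i)\le0\}$; and (b) $f_i(x_i^*,y_i^*,y_{-i}^* )\le f_i(x_i^\times,y_i^\times,y_{-i}^*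 )$, where $x_i^\times=1-x_i^*$ and $y_i^\times$ minimizes $f_i(x_i^\times,\cdot,y_{-i}^* )$ over $\{y_i: g_i(x_i^\times,y_i)\le 0\}$. Assumption (A1): for each $i$ and each fixed value of $x_i$ (and fixed $y_{-i}$), the first-order (KKT) conditions of player $i$'s problem with respect to $y_i$ are necessary and sufficient for optimality, and the feasible region $\{y_i: g_i(x_i,y_i)\le 0\}$ is compact and non-empty. Problem (P): given a sufficiently large constant $\widetilde K>0$ (larger than the difference between any upper and lower bounds on each $y_i$ and than the difference between the maximum and minimum values of each $f_i$) and functions $F$ of $(x_i,y_i)_{i\in I}$ and $G$ of the compensation variables, minimize $F((x_i,y_i)_{i\in I})+G((\zeta_i^{(1)},\zeta_i^{(0)})_{i\in I})$ over $x_i\in\{0,1\}$, $y_i,\widetilde y_i^{(1)},\widetilde y_i^{(0)}\in\mathbb{R}^m$, $\widetilde\lambda_i^{(1)},\widetilde\lambda_i^{(0)}\in\mathbb{R}^k_+$, $\kappa_i^{(1)},\kappa_i^{(0)},\zeta_i^{(1)},\zeta_i^{(0)}\in\mathbb{R}_+$, subject to, for all $i\in I$ and both $b\in\{0,1\}$: $\nabla_{y_i} f_i(b,\widetilde y_i^{(b)},y_{-i})+(\widetilde\lambda_i^{(b)})^T\nabla_{y_i} g_i(b,\widetilde y_i^{(b)})=0$; $0\le -g_i(b,\widetilde y_i^{(b)})\perp \widetilde\lambda_i^{(b)}\ge 0$; $f_i(1,\widetilde y_i^{(1)},y_{-i})+\kappa_i^{(1)}-\zeta_i^{(1)}-\kappa_i^{(0)}+\zeta_i^{(0)}=f_i(0,\widetilde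 y_i^{(0)},y_{-i})$; $\kappa_i^{(1)}+\zeta_i^{(1)}\le x_i\widetilde K$; $\kappa_i^{(0)}+\zeta_i^{(0)}\le (1-x_i)\widetilde K$; $\widetilde y_i^{(0)}-x_i\widetilde K\le y_i\le \widetilde y_i^{(0)}+x_i\widetilde K$; $\widetilde y_i^{(1)}-(1-x_i)\widetilde K\le y_i\le \widetilde y_i^{(1)}+(1-x_i)\widetilde K$ (componentwise). *)

From HB Require Import structures.
From mathcomp Require Import all_boot all_order all_algebra.
From mathcomp Require Import all_classical all_reals all_analysis.
Set Implicit Arguments. Unset Strict Implicit. Unset Printing Implicit Defensive.
Import Order.TTheory GRing.Theory Num.Theory.
Import numFieldNormedType.Exports.
Local Open Scope classical_set_scope.
Local Open Scope ring_scope.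

(* A binary decision is a bool (true = 1, false = 0).  A profile of continuous
   decisions is yy : 'I_n -> 'rV[R]_m; f i b z yy is f_i(b, z, y_{-i}) where
   y_{-i} is read off from yy (the i-th entry of yy is ignored, see the
   hypothesis in the theorem).  g i b z : 'rV_k are the k constraints.
   gradf i b z yy : 'rV_m is the gradient of f_i w.r.t. y_i;
   gradg i b z : 'M_(k,m) is the Jacobian of g_i w.r.t. y_i (row l = gradient
   of the l-th constraint). *)

Definition bR {R : realType} (b : bool) : R := (b : nat)%:R.

Definition profile (R : realType) (n m : nat) := 'I_n -> 'rV[R]_m.

Definition feas {R : realType} {n m k : nat}
  (g : 'I_n -> bool -> 'rV[R]_m -> 'rV[R]_k) (i : 'I_n) (b : bool)
  (z : 'rV[R]_m) : Prop :=
  forall l : 'I_k, g i b z 0 l <= 0.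

Definition is_argmin {R : realType} {n m k : nat}
  (f : 'I_n -> bool -> 'rV[R]_m -> profile R n m -> R)
  (g : 'I_n -> bool -> 'rV[R]_m -> 'rV[R]_k)
  (i : 'I_n) (b : bool) (yy : profile R n m) (z : 'rV[R]_m) : Prop :=
  feas g i b z /\
  forall z' : 'rV[R]_m, feas g i b z' -> f i b z yy <= f i b z' yy.

Definition KKT {R : realType} {n m k : nat}
  (g : 'I_n -> bool -> 'rV[R]_m -> 'rV[R]_k)
  (gradf : 'I_n -> bool -> 'rV[R]_m -> profile R n m -> 'rV[R]_m)
  (gradg : 'I_n -> bool -> 'rV[R]_m -> 'M[R]_(k, m))
  (i : 'I_n) (b : bool) (yy : profile R n m)
  (z : 'rV[R]_m) (lam : 'rV[R]_k) : Prop :=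
  gradf i b z yy + lam *m gradg i b z = 0 /\
  (forall l : 'I_k, 0 <= - g i b z 0 l) /\
  (forall l : 'I_k, 0 <= lam 0 l) /\
  (forall l : 'I_k, (- g i b z 0 l) * lam 0 l = 0).

Definition nash_eq {R : realType} {n m k : nat}
  (f : 'I_n -> bool -> 'rV[R]_m -> profile R n m -> R)
  (g : 'I_n -> bool -> 'rV[R]_m -> 'rV[R]_k)
  (x : 'I_n -> bool) (y : profile R n m) : Prop :=
  forall i : 'I_n,
    feas g i (x i) (y i) /\
    is_argmin f g i (x i) y (y i) /\
    exists yx : 'rV[R]_m,
      is_argmin f g i (~~ x i) y yx /\
      f i (x i) (y i) y <= f i (~~ x i) yx y.

(* Feasibility of a point for problem (P).  The tilde-variables are indexed by
   the player i and by b in {1 (true), 0 (false)}. *)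
Definition feasible_P {R : realType} {n m k : nat}
  (f : 'I_n -> bool -> 'rV[R]_m -> profile R n m -> R)
  (g : 'I_n -> bool -> 'rV[R]_m -> 'rV[R]_k)
  (gradf : 'I_n -> bool -> 'rV[R]_m -> profile R n m -> 'rV[R]_m)
  (gradg : 'I_n -> bool -> 'rV[R]_m -> 'M[R]_(k, m))
  (Kt : R)
  (x : 'I_n -> bool) (y : profile R n m)
  (yt : 'I_n -> bool -> 'rV[R]_m) (lam : 'I_n -> bool -> 'rV[R]_k)
  (kap zeta : 'I_n -> bool -> R) : Prop :=
  forall i : 'I_n,
    (forall b : bool, KKT g gradf gradg i b y (yt i b) (lam i b)) /\
    (forall b : bool, 0 <= kap i b /\ 0 <= zeta i b) /\
    f i true (yt i true) y + kap i true - zeta i true - kap i false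
      + zeta i false = f i false (yt i false) y /\
    kap i true + zeta i true <= bR (x i) * Kt /\
    kap i false + zeta i false <= (1 - bR (x i)) * Kt /\
    (forall j : 'I_m,
       yt i false 0 j - bR (x i) * Kt <= y i 0 j /\
       y i 0 j <= yt i false 0 j + bR (x i) * Kt) /\
    (forall j : 'I_m,
       yt i true 0 j - (1 - bR (x i)) * Kt <= y i 0 j /\
       y i 0 j <= yt i true 0 j + (1 - bR (x i)) * Kt).

From HB Require Import structures.
From mathcomp Require Import all_boot all_order all_algebra.
From mathcomp Require Import all_classical all_reals all_analysis.
From mathcomp Require Import lra.
Set Implicit Arguments. Unset Strict Implicit. Unset Printing Implicit Defensive.
Import Order.TTheory GRing.Theory Num.Theory.
Import numFieldNormedType.Exports.
Local Open Scope classical_set_scope.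
Local Open Scope ring_scope.

(* The constraints of (P) decouple over the players, so it suffices to treat one
   player i.  By (A1) the KKT blocks say exactly that tilde-y^(1) and tilde-y^(0)
   are best responses for x_i = 1 and x_i = 0.  With zeta = 0 the big-M bounds force
   y_i = tilde-y^(x_i) and kappa^(1 - x_i) = 0, so the balance equation reads
   f_i(x_i, y_i) + kappa^(x_i) = f_i(1 - x_i, tilde-y^(1 - x_i)) with kappa >= 0:
   this is condition (b) of a Nash equilibrium.  Conversely, taking for kappa^(x_i)
   the gap between the two optimal values satisfies the bound kappa <= K because K
   exceeds every difference of values of f_i and of feasible decisions. *)

Section Game.

Variables (R : realType) (n m k : nat).
Variables (f : 'I_n -> bool -> 'rV[R]_m -> profile R n m -> R)
  (g : 'I_n -> bool -> 'rV[R]_m -> 'rV[R]_k)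
  (gradf : 'I_n -> bool -> 'rV[R]_m -> profile R n m -> 'rV[R]_m)
  (gradg : 'I_n -> bool -> 'rV[R]_m -> 'M[R]_(k, m)).
Variables (Kt : R) (x : 'I_n -> bool) (y : profile R n m).

Section OnePlayer.

Variable i : 'I_n.

Hypothesis argmin_KKT : forall b z,
  is_argmin f g i b y z <-> exists lam, KKT g gradf gradg i b y z lam.

Definition nash_player : Prop :=
  feas g i (x i) (y i) /\
  is_argmin f g i (x i) y (y i) /\
  exists yx : 'rV[R]_m,
    is_argmin f g i (~~ x i) y yx /\ f i (x i) (y i) y <= f i (~~ x i) yx y.

(* The i-th block of [feasible_P] at zeta = 0, written so as to be convertible to it. *)
Definition feasible_P_player
    (yt : bool -> 'rV[R]_m) (lam : bool -> 'rV[R]_k) (kap : bool -> R) : Prop :=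
  (forall b : bool, KKT g gradf gradg i b y (yt b) (lam b)) /\
  (forall b : bool, 0 <= kap b /\ 0 <= (0 : R)) /\
  f i true (yt true) y + kap true - 0 - kap false + 0 = f i false (yt false) y /\
  kap true + 0 <= bR (x i) * Kt /\
  kap false + 0 <= (1 - bR (x i)) * Kt /\
  (forall j : 'I_m,
     yt false 0 j - bR (x i) * Kt <= y i 0 j /\
     y i 0 j <= yt false 0 j + bR (x i) * Kt) /\
  (forall j : 'I_m,
     yt true 0 j - (1 - bR (x i)) * Kt <= y i 0 j /\
     y i 0 j <= yt true 0 j + (1 - bR (x i)) * Kt).

Lemma nash_player_of_feasible yt lam kap :
  feasible_P_player yt lam kap -> nash_player.
Proof.
case=> HKKT [Hkap [Hbal [Hk1 [Hk0 [Hy0 Hy1]]]]].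
have Hbest b : is_argmin f g i b y (yt b) by apply/argmin_KKT; exists (lam b).
have [[kap1_ge0 _] [kap0_ge0 _]] := (Hkap true, Hkap false).
suff [Eyi Hle] : y i = yt (x i) /\
                  f i (x i) (yt (x i)) y <= f i (~~ x i) (yt (~~ x i)) y.
  rewrite /nash_player Eyi; split; first exact: (Hbest _).1.
  by split; [exact: Hbest | exists (yt (~~ x i))].
move: Hk1 Hk0 Hy0 Hy1; rewrite /bR; case: (x i) => /= Hk1 Hk0 Hy0 Hy1;
  (split; last lra); apply/rowP => j; apply: le_anti.
- by case: (Hy1 j) => *; apply/andP; split; lra.
- by case: (Hy0 j) => *; apply/andP; split; lra.
Qed.

Hypothesis value_gap_lt : forall b b' z z',
  feas g i b z -> feas g i b' z' -> `|f i b z y - f i b' z' y| < Kt.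
Hypothesis decision_gap_lt : forall b b' z z',
  feas g i b z -> feas g i b' z' -> forall j, `|z 0 j - z' 0 j| < Kt.

Lemma feasible_of_nash_player :
  nash_player -> exists yt lam kap, feasible_P_player yt lam kap.
Proof.
case=> Hfeas [Hbest [yx [Hbestx Hle]]].
have [lam1 Hlam1] := (argmin_KKT _ _).1 Hbest.
have [lam0 Hlam0] := (argmin_KKT _ _).1 Hbestx.
have Hgap := value_gap_lt Hbestx.1 Hfeas.
have Hdist j := decision_gap_lt Hfeas Hbestx.1 j.
exists (fun c => if c == x i then y i else yx),
       (fun c => if c == x i then lam1 else lam0),
       (fun c => if c == x i then f i (~~ x i) yx y - f i (x i) (y i) y else 0).
move: Hlam1 Hlam0 Hle Hgap Hdist; rewrite /feasible_P_player /bR ltr_norml.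
case: (x i) => /= Hlam1 Hlam0 Hle /andP[Hgap1 Hgap2] Hdist;
  (split; first by case);
  (split; first by case=> /=; split; lra);
  do 3 (split; first lra);
  split=> j; have := Hdist j; rewrite ltr_distl => /andP[Hd1 Hd2]; split; lra.
Qed.

End OnePlayer.

Lemma nash_eq_playerwise : nash_eq f g x y <-> forall i, nash_player i.
Proof. by []. Qed.

Lemma feasible_P_playerwise yt lam kap :
  feasible_P f g gradf gradg Kt x y yt lam kap (fun _ _ => 0) <->
  forall i, feasible_P_player i (yt i) (lam i) (kap i).
Proof. by []. Qed.

End Game.

Theorem theorem1 (R : realType) (n m k : nat)
  (f : 'I_n -> bool -> 'rV[R]_m -> profile R n m -> R)
  (g : 'I_n -> bool -> 'rV[R]_m -> 'rV[R]_k)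
  (gradf : 'I_n -> bool -> 'rV[R]_m -> profile R n m -> 'rV[R]_m)
  (gradg : 'I_n -> bool -> 'rV[R]_m -> 'M[R]_(k, m))
  (Kt : R)
  (* f_i depends on the profile only through the rivals' decisions y_{-i} *)
  (Hrivals : forall (i : 'I_n) (b : bool) (z : 'rV[R]_m) (yy yy' : profile R n m),
      (forall j : 'I_n, j != i -> yy j = yy' j) -> f i b z yy = f i b z yy')
  (* gradf, gradg are the gradients / Jacobian w.r.t. the own variable y_i *)
  (Hgradf : forall (i : 'I_n) (b : bool) (yy : profile R n m) (z : 'rV[R]_m),
      differentiable (fun w : 'rV[R]_m => f i b w yy) z /\
      forall j : 'I_m,
        gradf i b z yy 0 j = 'D_(delta_mx 0 j) (fun w : 'rV[R]_m => f i b w yy) z)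
  (Hgradg : forall (i : 'I_n) (b : bool) (z : 'rV[R]_m) (l : 'I_k),
      differentiable (fun w : 'rV[R]_m => g i b w 0 l) z /\
      forall j : 'I_m,
        gradg i b z l j = 'D_(delta_mx 0 j) (fun w : 'rV[R]_m => g i b w 0 l) z)
  (* Assumption (A1) *)
  (HA1 : forall (i : 'I_n) (b : bool) (yy : profile R n m),
      (exists z : 'rV[R]_m, feas g i b z) /\
      compact [set z : 'rV[R]_m | feas g i b z] /\
      (forall z : 'rV[R]_m,
         is_argmin f g i b yy z <->
         exists lam : 'rV[R]_k, KKT g gradf gradg i b yy z lam))
  (* Kt is a sufficiently large positive constant *)
  (HKpos : 0 < Kt)
  (HKy : forall (i : 'I_n) (b b' : bool) (z z' : 'rV[R]_m),
      feas g i b z -> feas g i b' z' ->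
      forall j : 'I_m, `|z 0 j - z' 0 j| < Kt)
  (HKf : forall (i : 'I_n) (b b' : bool) (z z' : 'rV[R]_m) (yy : profile R n m),
      (forall j : 'I_n, exists bj : bool, feas g j bj (yy j)) ->
      feas g i b z -> feas g i b' z' ->
      `|f i b z yy - f i b' z' yy| < Kt)
  (x : 'I_n -> bool) (y : profile R n m) :
  nash_eq f g x y <->
  exists (yt : 'I_n -> bool -> 'rV[R]_m) (lam : 'I_n -> bool -> 'rV[R]_k)
         (kap : 'I_n -> bool -> R),
    feasible_P f g gradf gradg Kt x y yt lam kap (fun _ _ => 0).
Proof.
have argmin_KKT i b z := (HA1 i b y).2.2 z.
rewrite nash_eq_playerwise.
split=> [Hnash | [yt [lam [kap /feasible_P_playerwise Hfeas]]] i]; last first.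
  exact (nash_player_of_feasible (argmin_KKT i) (Hfeas i)).
have Hprofile j : exists bj, feas g j bj (y j) by exists (x j); exact: (Hnash j).1.
have /choice[F HF] i : exists t,
    feasible_P_player f g gradf gradg Kt x y i t.1.1 t.1.2 t.2.
  have [yt [lam [kap H]]] :=
    feasible_of_nash_player (argmin_KKT i)
      (fun b b' z z' => HKf i b b' z z' y Hprofile) (HKy i) (Hnash i).
  by exists (yt, lam, kap).
by exists (fun i => (F i).1.1), (fun i => (F i).1.2), (fun i => (F i).2);
  apply/feasible_P_playerwise.
Qed.
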